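(* In the setting of the Structural Lemma for SpDeques, let $T_\infty$ be an integer at least the depth of $\mathcal T$ and define $w(v) = T_\infty - d(v)$, where $d(v)$ is the depth of $v$ in $\mathcal T$. Then at every moment of the process, with $v_0$ the assigned node (if any) and $v_1,\ldots,v_k$ the deque nodes from bottom to top, \[ w(v_0) \leq w(v_1) < w(v_2) < \cdots < w(v_{k-1}) < w(v_k). \]
   Context: Setting: $\mathcal T$ is a rooted tree; a state consists of an optional assigned node $v_0$ and a deque $v_1,\ldots,v_k$ (bottom to top) of non-root nodes of $\mathcal T$; the state changes only by (a) assigning any non-root node when there is no assigned node and the deque is empty; (b) executing the assigned node $v_0$: with no children, $v_0$ is discarded and the bottom deque node (if any) is removed and becomes assigned; with one child $x$, $x$ becomes assigned; with two children $x,y$, $x$ is pushed to the bottom of the deque and $y$ becomes assigned; (c) removing the top deque node. The weight $w(v)$ corresponds to the paper's node weight $T_\infty - d(v)$ with $T_\infty$ the critical-path length. *)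

From HB Require Import structures.
From mathcomp Require Import all_boot all_order all_algebra.
Set Implicit Arguments. Unset Strict Implicit. Unset Printing Implicit Defensive.
Import Order.TTheory GRing.Theory Num.Theory.

Section SpDeque.
Variables (T : finType) (root : T) (par : T -> T).

Definition is_rooted_tree : Prop :=
  par root = root /\ forall v : T, exists n : nat, iter n par v = root.

(* depth d(v) = least n with par^n(v) = root (it is < #|T| in a rooted tree). *)
Definition depth (v : T) : nat :=
  find (fun n => iter n par v == root) (iota 0 #|T|).

Definition tree_depth : nat := \max_(v : T) depth v.

Definition children (v : T) : {set T} := [set x | (x != root) && (par x == v)].

(* A state: optional assigned node v0, and the deque v1..vk as a seq
   listed from bottom (head) to top (last). *)
Definition state := (option T * seq T)%type.

Inductive step : state -> state -> Prop :=
  | step_assign (v : T) : v != root -> step (None, [::]) (Some v, [::])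
  | step_leaf_empty (v0 : T) :
      children v0 = set0 -> step (Some v0, [::]) (None, [::])
  | step_leaf_pop (v0 x : T) (dq : seq T) :
      children v0 = set0 -> step (Some v0, x :: dq) (Some x, dq)
  | step_one (v0 x : T) (dq : seq T) :
      children v0 = [set x] -> step (Some v0, dq) (Some x, dq)
  | step_two (v0 x y : T) (dq : seq T) :
      x != y -> children v0 = [set x; y] ->
      step (Some v0, dq) (Some y, x :: dq)
  | step_steal (o : option T) (dq : seq T) (x : T) :
      step (o, rcons dq x) (o, dq).

Inductive reachable : state -> Prop :=
  | reach_init : reachable (None, [::])
  | reach_step (s s' : state) : reachable s -> step s s' -> reachable s'.

End SpDeque.

From HB Require Import structures.
From mathcomp Require Import all_boot all_order all_algebra.
Import Order.TTheory GRing.Theory Num.Theory.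

(* Every move keeps the depths along "assigned node, bottom of the deque, ...,
   top of the deque" weakly decreasing at the first link and strictly
   decreasing afterwards: a pushed or newly assigned node is a child of the
   executed node, so it is one level deeper than the node it replaces, while
   popping the bottom or stealing the top only shortens the chain.  The weight
   T_inf - d(v) reverses this order. *)

Section Depth.
Variables (T : finType) (root : T) (par : T -> T).
Hypothesis Htree : is_rooted_tree root par.

Local Notation depth := (depth root par).

Lemma exists_iter_root_lt_card v : exists2 m, m < #|T| & iter m par v = root.
Proof.
case: Htree => _ /(_ v) [n iter_n].
have root_orbit : fconnect par v root by rewrite -iter_n fconnect_iter.
exists (findex par v root); last exact: iter_findex.
exact: leq_trans (findex_max root_orbit) (max_card _).
Qed.

Lemma depth_lt_card_iter v : depth v < #|T| /\ iter (depth v) par v = root.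
Proof.
have has_root : has (fun n => iter n par v == root) (iota 0 #|T|).
  have [m lt_m_T iter_m] := exists_iter_root_lt_card v.
  by apply/hasP; exists m; rewrite ?mem_iota ?iter_m.
have := has_root; rewrite has_find size_iota => lt_depth.
by have := nth_find 0 has_root; rewrite nth_iota // add0n => /eqP.
Qed.

Lemma depth_min v m : m < #|T| -> iter m par v = root -> depth v <= m.
Proof.
move=> lt_m_T iter_m; rewrite leqNgt; apply/negP => lt_m_depth.
have := before_find 0 (lt_m_depth : m < find _ _).
by rewrite nth_iota // add0n iter_m eqxx.
Qed.

Lemma depth_par x : x != root -> depth x = (depth (par x)).+1.
Proof.
move=> x_nroot; have [lt_x_T iter_x] := depth_lt_card_iter x.
have [_ iter_px] := depth_lt_card_iter (par x).
move: lt_x_T iter_x; case def_dx: (depth x) => [|n] lt_x_T iter_x.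
  by rewrite -iter_x eqxx in x_nroot.
have le_px_n : depth (par x) <= n.
  by apply: depth_min; [exact: ltnW | rewrite -iterSr].
apply/eqP; rewrite eqSS eqn_leq le_px_n andbT -ltnS -def_dx.
by apply: depth_min; [exact: leq_ltn_trans _ lt_x_T | rewrite iterSr].
Qed.

Lemma depth_children v x : x \in children root par v -> depth x = (depth v).+1.
Proof. by rewrite inE => /andP[x_nroot /eqP <-]; apply: depth_par. Qed.

Definition depth_ordered (s : state T) : Prop :=
  (forall v0 v1 rest, s.1 = Some v0 -> s.2 = v1 :: rest -> depth v1 <= depth v0)
  /\ sorted (fun a b => depth b < depth a) s.2.

Lemma step_depth_ordered s s' :
  step root par s s' -> depth_ordered s -> depth_ordered s'.
Proof.
move=> st [first_ord sorted_dq]; rewrite /depth_ordered.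
case: st first_ord sorted_dq
  => /= [v _ | v0 _ | v0 x dq _ | v0 x dq ch_v0 | v0 x y dq _ ch_v0 | o dq x]
  first_ord sorted_dq //.
- split=> [_ v1 rest [<-] def_dq|]; last exact: path_sorted sorted_dq.
  by move: sorted_dq; rewrite def_dq /= => /andP[/ltnW].
- split=> // _ v1 rest [<-] def_dq.
  rewrite (@depth_children v0 x) ?ch_v0 ?set11 //.
  exact: leq_trans (first_ord _ _ _ erefl def_dq) (leqnSn _).
- have dx : depth x = (depth v0).+1 by apply: depth_children; rewrite ch_v0 set21.
  have dy : depth y = (depth v0).+1 by apply: depth_children; rewrite ch_v0 set22.
  split=> [_ _ _ [<-] [<- _]|]; first by rewrite dx dy.
  case: dq first_ord sorted_dq => //= v1 rest first_ord ->.
  by rewrite andbT dx ltnS (first_ord _ _ _ erefl erefl).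
- split=> [v0 v1 rest def_o def_dq|].
    by apply: (first_ord v0 v1 (rcons rest x) def_o); rewrite def_dq.
  by case: dq sorted_dq {first_ord} => //= v1 rest; rewrite rcons_path => /andP[].
Qed.

Lemma reachable_depth_ordered s : reachable root par s -> depth_ordered s.
Proof.
elim=> [|s1 s2 _ ord_s1 step_s12]; first by [].
exact: step_depth_ordered step_s12 ord_s1.
Qed.

End Depth.

Theorem mainTheorem5 (T : finType) (root : T) (par : T -> T)
  (Htree : is_rooted_tree root par)
  (Tinf : int) (HTinf : ((tree_depth root par)%:Z <= Tinf)%R)
  (o : option T) (dq : seq T) :
  reachable root par (o, dq) ->
  let w := fun v : T => (Tinf - (depth root par v)%:Z)%R in
  (forall (v0 v1 : T) (rest : seq T),
      o = Some v0 -> dq = v1 :: rest -> (w v0 <= w v1)%R) /\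
  sorted (fun a b => (w a < w b)%R) dq.
Proof.
move=> /(@reachable_depth_ordered _ _ _ Htree) [first_ord sorted_dq] w; split.
  move=> v0 v1 rest def_o def_dq; rewrite /w lerD2l lerN2 lez_nat.
  exact: first_ord def_o def_dq.
by apply: sub_sorted sorted_dq => a b; rewrite /w ltrD2l ltrN2 ltz_nat.
Qed.
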